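(* With the setup below, the sequence $x_1,\ldots,x_p,y_1,\ldots,y_q$ is a regular sequence on the $R$-module $\widetilde{F}\cong R/\big(J+(\widetilde{\vec{x}}\widetilde{\vec{y}})+J'\big)$.
   Context: Let $k$ be a field, $\vec{x}=x_1,\ldots,x_n$, $\vec{y}=y_1,\ldots,y_{n'}$, $R=k[[\vec{x},\vec{y}]]$, $0\le p\le n$, $0\le q\le n'$. Let $J$ be an ideal generated by power series in $x_{p+1},\ldots,x_n$ only with $J\subseteq(x_{p+1},\ldots,x_n)^2$, and $J'$ an ideal generated by power series in $y_{q+1},\ldots,y_{n'}$ only with $J'\subseteq(y_{q+1},\ldots,y_{n'})^2$ (viewed in $R$). Let $\widetilde{\vec{x}}=x_{p+1},\ldots,x_n$, $\widetilde{\vec{y}}=y_{q+1},\ldots,y_{n'}$, $W=R/(\widetilde{\vec{x}},\widetilde{\vec{y}})$, and $\widetilde{F}=\frac{R}{J+(\widetilde{\vec{y}})}\times_W\frac{R}{(\widetilde{\vec{x}})+J'}$, the fiber product over the natural surjections onto $W$; $(\widetilde{\vec{x}}\widetilde{\vec{y}})$ is the ideal generated by all $x_iy_j$ with $p<i\le n$, $q<j\le n'$. *)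

From Stdlib Require List.
From mathcomp Require Import all_boot all_algebra.
Set Implicit Arguments. Unset Strict Implicit. Unset Printing Implicit Defensive.
Import GRing.Theory.
Local Open Scope ring_scope.

Section PS.
Variables (k : fieldType) (N : nat).

Definition mono := 'I_N -> nat.
Definition ps := mono -> k.

Definition ps0 : ps := fun _ => 0.
Definition ps1 : ps := fun m => if [forall i, m i == 0%N] then 1 else 0.
Definition psadd (f g : ps) : ps := fun m => f m + g m.
Definition psopp (f : ps) : ps := fun m => - f m.
(* Cauchy product: (f g)_m = sum_{a <= m} f_a g_{m-a}; the exponents a <= m
   are enumerated as finite functions bounded by the total degree of m. *)
Definition psmul (f g : ps) : ps := fun m =>
  \sum_(a : {ffun 'I_N -> 'I_(\sum_(i < N) m i).+1} | [forall i, (a i <= m i)%N])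
     f (fun i => nat_of_ord (a i)) * g (fun i => (m i - a i)%N).
Definition psX (i : 'I_N) : ps := fun m => if [forall j, m j == (j == i)] then 1 else 0.

Definition pssum (l : seq ps) : ps := foldr psadd ps0 l.

Definition ideal_gen (S : ps -> Prop) : ps -> Prop := fun f =>
  exists l : seq (ps * ps), (forall c, List.In c l -> S c.2) /\
    f = pssum [seq psmul c.1 c.2 | c <- l].

Definition ideal_add (I1 I2 : ps -> Prop) : ps -> Prop := fun f =>
  exists a b, I1 a /\ I2 b /\ f = psadd a b.

Definition var_ideal (A : pred 'I_N) : ps -> Prop :=
  ideal_gen (fun f => exists2 i, A i & f = psX i).

Definition prod_ideal (A B : pred 'I_N) : ps -> Prop :=
  ideal_gen (fun f => exists i j, [/\ A i, B j & f = psmul (psX i) (psX j)]).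

Definition only_vars (A : pred 'I_N) (f : ps) : Prop :=
  forall m : mono, f m != 0 -> forall i, ~~ A i -> m i = 0%N.

(* ---- R-modules given as  M / K  with  K <= M <= R x R  ---- *)
Definition pair := (ps * ps)%type.
Definition padd (u v : pair) : pair := (psadd u.1 v.1, psadd u.2 v.2).
Definition pscale (r : ps) (u : pair) : pair := (psmul r u.1, psmul r u.2).
Definition pzero : pair := (ps0, ps0).

(* u lies in K + (zs) M *)
Definition in_sub (M K : pair -> Prop) (zs : seq ps) (u : pair) : Prop :=
  exists w, K w /\ exists vs : seq pair,
    size vs = size zs /\ (forall v, List.In v vs -> M v) /\
    u = padd w (foldr padd pzero [seq pscale zv.1 zv.2 | zv <- zip zs vs]).

Definition regular_seq_mod (M K : pair -> Prop) (zs : seq ps) : Prop :=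
  (forall i, (i < size zs)%N -> forall u, M u ->
     in_sub M K (take i zs) (pscale (nth ps0 zs i) u) ->
     in_sub M K (take i zs) u)
  /\ (exists u, M u /\ ~ in_sub M K zs u).

End PS.

From mathcomp Require Import all_boot all_algebra.
From mathcomp Require Import zify.
From Stdlib Require List.
From Stdlib Require Import FunctionalExtensionality.

(* Every variable z = X_i in the sequence x_1..x_p, y_1..y_q is
   distinct from the variables x~, y~ and from the earlier members of the
   sequence, and none of the generators of J, J' involves it.  Let
   D = "divide by X_i", the shift of coefficients  (D f)_m = f_(m + e_i).
   D is R'-linear over the series R' not involving X_i, and D (X_i u) = u.
   Hence D preserves every ideal with generators free of X_i, hence the
   module M, the submodule K and K + (z_1..z_{i-1}) M; applying D to a
   relation  X_i u \in K + (z_1..z_{i-1}) M  gives  u \in K + (...) M,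
   i.e. X_i is a nonzerodivisor on the quotient.  Nontriviality of the
   quotient comes from constant terms: every element of K + (zs) M has a
   first component with zero constant term, while (1, 1) lies in M. *)

Set Implicit Arguments. Unset Strict Implicit. Unset Printing Implicit Defensive.
Import GRing.Theory.
Local Open Scope ring_scope.

Notation mono_of a := (fun i => nat_of_ord (a i)).

Section CauchyProduct.
Variables (k : fieldType) (N : nat).

Definition deg (m : mono N) : nat := (\sum_(i < N) m i)%N.

Definition mono_le (a m : mono N) : bool := [forall i, (a i <= m i)%N].

Definition mono0 : mono N := fun _ => 0%N.

Definition bound_mono (m x : mono N) : {ffun 'I_N -> 'I_(deg m).+1} :=
  [ffun i => inord (x i)].

(* Each exponent is bounded by the total degree, so [bound_mono m] loses
   no information on exponent vectors below m. *)
Lemma le_deg m i : (m i <= deg m)%N.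
Proof. by rewrite /deg (bigD1 i) //= leq_addr. Qed.

Lemma bound_monoK m x : mono_le x m -> mono_of (bound_mono m x) = x.
Proof.
move=> xm; apply: functional_extensionality => i.
by rewrite ffunE inordK // ltnS (leq_trans (forallP xm i) (le_deg m i)).
Qed.

Lemma mono_ofK m (b : {ffun 'I_N -> 'I_(deg m).+1}) :
  bound_mono m (mono_of b) = b.
Proof. by apply/ffunP => i; rewrite ffunE; apply: val_inj; rewrite /= inordK. Qed.

Lemma psmulE (f g : ps k N) m : psmul f g m =
  \sum_(a : {ffun 'I_N -> 'I_(deg m).+1} | mono_le (mono_of a) m)
     f (mono_of a) * g (fun i => (m i - mono_of a i)%N).
Proof. by []. Qed.

Lemma cauchy_sum_reindex m m' (F G : mono N -> k) (phi psi : mono N -> mono N) :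
  (forall b, mono_le b m' -> mono_le (phi b) m /\ F (phi b) = G b) ->
  (forall a, mono_le a m -> F a != 0 -> mono_le (psi a) m' /\ phi (psi a) = a) ->
  (forall b, mono_le b m' -> psi (phi b) = b) ->
  \sum_(a : {ffun 'I_N -> 'I_(deg m).+1} | mono_le (mono_of a) m) F (mono_of a) =
  \sum_(b : {ffun 'I_N -> 'I_(deg m').+1} | mono_le (mono_of b) m') G (mono_of b).
Proof.
move=> phiP psiP phiK.
rewrite (bigID (fun a : {ffun _ -> 'I_(deg m).+1} => F (mono_of a) != 0)) /=.
rewrite [X in _ + X = _]big1 ?addr0; last by move=> a /andP[_ /negPn/eqP].
rewrite [RHS](bigID (fun b : {ffun _ -> 'I_(deg m').+1} => G (mono_of b) != 0)) /=.
rewrite [X in _ = _ + X]big1 ?addr0; last by move=> b /andP[_ /negPn/eqP].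
rewrite (reindex_onto
    (fun b : {ffun 'I_N -> 'I_(deg m').+1} => bound_mono m (phi (mono_of b)))
    (fun a : {ffun 'I_N -> 'I_(deg m).+1} => bound_mono m' (psi (mono_of a))));
  last first.
  by move=> a /andP[am Fa]; have [bm' E] := psiP _ am Fa;
  rewrite bound_monoK // E mono_ofK.
apply: eq_big => [b|b].
  case bm': (mono_le (mono_of b) m'); last first.
    apply/negbTE/negP => /andP[/andP[am Fa] /eqP eb].
    have [lm' _] := psiP _ am Fa.
    by move: bm'; rewrite -eb bound_monoK // lm'.
  have [am FG] := phiP _ bm'.
  by rewrite bound_monoK // am FG phiK // mono_ofK eqxx andbT.
move=> /andP[/andP[am Fa] /eqP eb].
have [lm' _] := psiP _ am Fa.
have bm' : mono_le (mono_of b) m' by rewrite -eb bound_monoK.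
by have [am' FG] := phiP _ bm'; rewrite bound_monoK.
Qed.

Lemma cauchy_sum_at0 (F : mono N -> k) :
  \sum_(b : {ffun 'I_N -> 'I_(deg mono0).+1} | mono_le (mono_of b) mono0)
     F (mono_of b) = F mono0.
Proof.
have le00 : mono_le mono0 mono0 by apply/forallP.
rewrite (bigD1 (bound_mono mono0 mono0)) /=; last by rewrite bound_monoK.
rewrite bound_monoK // big1 ?addr0 // => b /andP[b0 nb].
case/eqP: nb; apply/ffunP => j; apply: val_inj.
rewrite ffunE /= inordK //=; apply/eqP; rewrite -leqn0; exact: (forallP b0 j).
Qed.

End CauchyProduct.

Arguments mono0 {N}.

Section ConstantTerm.
Variables (k : fieldType) (N : nat).

Lemma psmul_const (f g : ps k N) : psmul f g mono0 = f mono0 * g mono0.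
Proof.
exact: (cauchy_sum_at0 (fun x => f x * g (fun i => (mono0 i - x i)%N))).
Qed.

Lemma psX_const (j : 'I_N) : psX k j mono0 = 0.
Proof. by rewrite /psX; case: ifP => // /forallP/(_ j)/eqP; rewrite eqxx. Qed.

Lemma ideal_gen_const (S : ps k N -> Prop) f :
  (forall g, S g -> g mono0 = 0) -> ideal_gen S f -> f mono0 = 0.
Proof.
move=> S0 [l [Sl ->]]; elim: l Sl => [|c l IH] Sl //=.
rewrite /psadd psmul_const (S0 _ (Sl c (or_introl erefl))) mulr0 add0r.
exact: IH (fun c' h => Sl c' (or_intror h)).
Qed.

Lemma var_ideal_const (A : pred 'I_N) (f : ps k N) :
  var_ideal A f -> f mono0 = 0.
Proof. by apply: ideal_gen_const => _ [j _ ->]; apply: psX_const. Qed.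

Lemma prod_ideal_const (A B : pred 'I_N) (f : ps k N) :
  prod_ideal A B f -> f mono0 = 0.
Proof.
by apply: ideal_gen_const => _ [i [j [_ _ ->]]]; rewrite psmul_const psX_const mul0r.
Qed.

Lemma combination_const (zs : seq (ps k N)) (vs : seq (pair k N)) :
  (forall z, List.In z zs -> z mono0 = 0) ->
  (foldr (@padd k N) (@pzero k N) [seq pscale zv.1 zv.2 | zv <- zip zs vs]).1
    mono0 = 0.
Proof.
elim: zs vs => [|z zs IH] [|v vs] z0 //=.
rewrite /psadd psmul_const (z0 z (or_introl erefl)) mul0r add0r.
exact: IH (fun c' h => z0 c' (or_intror h)).
Qed.

Lemma in_sub_const (M K : pair k N -> Prop) zs u :
  (forall w, K w -> w.1 mono0 = 0) ->
  (forall z, List.In z zs -> z mono0 = 0) ->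
  in_sub M K zs u -> u.1 mono0 = 0.
Proof.
move=> K0 z0 [w [Kw [vs [_ [_ ->]]]]].
by rewrite /= /psadd K0 // combination_const // addr0.
Qed.

Lemma psX_seq_nontrivial (M K : pair k N -> Prop) (s : seq 'I_N) :
  (forall w, K w -> w.1 mono0 = 0) -> M (@ps1 k N, @ps1 k N) ->
  exists u, M u /\ ~ in_sub M K (map (@psX k N) s) u.
Proof.
move=> K0 M1; exists (@ps1 k N, @ps1 k N); split => // /(in_sub_const K0) s0.
have /eqP : @ps1 k N mono0 = 0.
  by apply: s0 => z /List.in_map_iff[j [<- _]]; apply: psX_const.
by rewrite /ps1 ifT ?oner_eq0 //; apply/forallP.
Qed.

End ConstantTerm.

Section DivisionByVariable.
Variables (k : fieldType) (N : nat) (i0 : 'I_N).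

Definition shift (x : mono N) : mono N := fun j => (x j + (j == i0))%N.
Definition unshift (x : mono N) : mono N := fun j => (x j - (j == i0))%N.

(* Division by X_i0, discarding the terms not divisible by X_i0. *)
Definition divX (f : ps k N) : ps k N := fun m => f (shift m).
Definition divXp (u : pair k N) : pair k N := (divX u.1, divX u.2).

Definition freeX (g : ps k N) : Prop := forall m, g m != 0 -> m i0 = 0%N.

Lemma divX_mulr r g : freeX g -> divX (psmul r g) = psmul (divX r) g.
Proof.
move=> fg; apply: functional_extensionality => m; rewrite /divX !psmulE.
apply: (@cauchy_sum_reindex _ _ (shift m) m
   (fun x => r x * g (fun i => (shift m i - x i)%N))
   (fun x => r (shift x) * g (fun i => (m i - x i)%N)) shift unshift).
- move=> b bm; split.
    by apply/forallP => j; rewrite /shift leq_add2r (forallP bm j).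
  by congr (_ * g _); apply: functional_extensionality => j; rewrite /shift subnDr.
- move=> a am; rewrite mulf_eq0 negb_or => /andP[_ /fg/eqP].
  rewrite subn_eq0 /shift eqxx => ai0; split.
    apply/forallP => j; have := forallP am j; rewrite /unshift /shift.
    by case: eqP => [->|_] /=; lia.
  apply: functional_extensionality => j; rewrite /shift /unshift.
  by case: eqP => [->|_] /=; lia.
- by move=> b _; apply: functional_extensionality => j; rewrite /unshift /shift addnK.
Qed.

Lemma divX_mull g r : freeX g -> divX (psmul g r) = psmul g (divX r).
Proof.
move=> fg; apply: functional_extensionality => m; rewrite /divX !psmulE.
apply: (@cauchy_sum_reindex _ _ (shift m) m
   (fun x => g x * r (fun i => (shift m i - x i)%N))
   (fun x => g x * r (shift (fun i => (m i - x i)%N))) id id) => //.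
- move=> b bm; split.
    by apply/forallP => j; have := forallP bm j; rewrite /shift; lia.
  congr (_ * r _); apply: functional_extensionality => j.
  by have := forallP bm j; rewrite /shift; lia.
- move=> a am; rewrite mulf_eq0 negb_or => /andP[/fg ai0 _]; split => //.
  apply/forallP => j; have := forallP am j; rewrite /shift.
  by case: eqP => [->|_] /=; lia.
Qed.

Lemma divX_psXK u : divX (psmul (psX k i0) u) = u.
Proof.
apply: functional_extensionality => m; rewrite /divX psmulE.
(* Only the exponent e of X_i0 itself contributes to the Cauchy sum. *)
pose e : mono N := fun j => nat_of_bool (j == i0).
rewrite -[u m](@cauchy_sum_at0 _ N (fun _ => u m)).
apply: (@cauchy_sum_reindex _ _ (shift m) mono0
   (fun x => psX k i0 x * u (fun i => (shift m i - x i)%N))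
   (fun _ => u m) (fun _ => e) (fun _ => mono0)).
- move=> b _; split; first by apply/forallP => j; rewrite /shift leq_addl.
  rewrite /psX (_ : [forall j, e j == (j == i0)]); last exact/forallP.
  by rewrite mul1r; congr u; apply: functional_extensionality => j; rewrite /shift addnK.
- move=> a _; rewrite mulf_eq0 negb_or /psX => /andP[].
  case: ifP => [/forallP ae _ _|_]; last by rewrite eqxx.
  by split; [apply/forallP | apply: functional_extensionality => j; exact/esym/eqP/ae].
- move=> b b0; apply: functional_extensionality => j.
  by apply/esym/eqP; rewrite -leqn0 (forallP b0 j).
Qed.

Lemma divXp_psXK u : divXp (pscale (psX k i0) u) = u.
Proof. by case: u => a b; rewrite /divXp /pscale /= !divX_psXK. Qed.

Lemma psX_freeX j : j != i0 -> freeX (psX k j).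
Proof.
move=> ji0 m; rewrite /psX; case: ifP => [/forallP/(_ i0)/eqP -> _|_].
  by rewrite eq_sym (negbTE ji0).
by rewrite eqxx.
Qed.

Lemma only_vars_freeX (A : pred 'I_N) g : ~~ A i0 -> only_vars A g -> freeX g.
Proof. by move=> Ai0 gA m gm; exact: gA m gm i0 Ai0. Qed.

Lemma ideal_gen_divX (S : ps k N -> Prop) f :
  (forall g, S g -> freeX g) -> ideal_gen S f -> ideal_gen S (divX f).
Proof.
move=> Sfree [l [Sl ->]]; elim: l Sl => [|c l IH] Sl; first by exists [::].
have [l' [Sl' El']] := IH (fun c' h => Sl c' (or_intror h)).
exists ((divX c.1, c.2) :: l'); split.
  by move=> c' [<-|h]; [exact: Sl (or_introl erefl) | exact: Sl'].
transitivity (psadd (divX (psmul c.1 c.2))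
                    (divX (pssum [seq psmul c'.1 c'.2 | c' <- l]))); first by [].
by rewrite El' divX_mulr //; apply/Sfree/Sl; left.
Qed.

Lemma only_vars_ideal_divX (A : pred 'I_N) (S : ps k N -> Prop) f :
  ~~ A i0 -> (forall g, S g -> only_vars A g) ->
  ideal_gen S f -> ideal_gen S (divX f).
Proof. by move=> Ai0 SA; apply: ideal_gen_divX => g /SA; apply: only_vars_freeX. Qed.

Lemma var_ideal_divX (A : pred 'I_N) f :
  ~~ A i0 -> var_ideal A f -> var_ideal A (divX f).
Proof.
move=> Ai0; apply: ideal_gen_divX => g [j Aj ->]; apply: psX_freeX.
by apply: contraNneq Ai0 => <-.
Qed.

Lemma ideal_add_divX (I1 I2 : ps k N -> Prop) f :
  (forall f, I1 f -> I1 (divX f)) -> (forall f, I2 f -> I2 (divX f)) ->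
  ideal_add I1 I2 f -> ideal_add I1 I2 (divX f).
Proof. by move=> h1 h2 [a [b [ha [hb ->]]]]; exists (divX a), (divX b); auto. Qed.

Lemma divXp_combination (zs : seq (ps k N)) vs :
  (forall z, List.In z zs -> freeX z) ->
  divXp (foldr (@padd k N) (@pzero k N) [seq pscale zv.1 zv.2 | zv <- zip zs vs]) =
  foldr (@padd k N) (@pzero k N) [seq pscale zv.1 zv.2 | zv <- zip zs (map divXp vs)].
Proof.
elim: zs vs => [|z zs IH] [|v vs] zfree //=.
rewrite -IH; last by move=> z' h; apply: zfree; right.
have fz : freeX z by apply: zfree; left.
have divXp_padd a b : divXp (padd a b) = padd (divXp a) (divXp b) by [].
by rewrite divXp_padd /divXp /pscale /= !divX_mull.
Qed.

Lemma psX_nonzerodivisor (M K : pair k N -> Prop) zs u :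
  (forall v, M v -> M (divXp v)) -> (forall v, K v -> K (divXp v)) ->
  (forall z, List.In z zs -> freeX z) ->
  in_sub M K zs (pscale (psX k i0) u) -> in_sub M K zs u.
Proof.
move=> Mstab Kstab zfree [w [Kw [vs [vs_size [Mvs Eu]]]]].
rewrite -(divXp_psXK u) Eu.
exists (divXp w); split; first exact: Kstab.
exists (map divXp vs); split; first by rewrite size_map vs_size.
split; last by rewrite -divXp_combination.
by move=> v /List.in_map_iff[v' [<- /Mvs]]; apply: Mstab.
Qed.

End DivisionByVariable.

Lemma In_mem (T : eqType) (x : T) (l : seq T) : List.In x l -> x \in l.
Proof.
by elim: l => //= a l IH [->|/IH]; rewrite in_cons ?eqxx // => ->; rewrite orbT.
Qed.

Lemma nth_notin_take (T : eqType) (x0 : T) (s : seq T) i :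
  uniq s -> (i < size s)%N -> nth x0 s i \notin take i s.
Proof.
by move=> us lti; apply/negP => /index_ltn; rewrite index_uniq // ltnn.
Qed.

(* Distinct variables X_s form a "nonzerodivisor sequence" on M / K as soon
   as M and K are stable under division by each of them: the i-th variable
   is distinct from the earlier ones, so psX_nonzerodivisor applies. *)
Lemma psX_seq_nonzerodivisor (k : fieldType) (N : nat) (M K : pair k N -> Prop)
    (s : seq 'I_N) :
  uniq s ->
  (forall i0, i0 \in s -> forall v, M v -> M (divXp i0 v)) ->
  (forall i0, i0 \in s -> forall v, K v -> K (divXp i0 v)) ->
  let zs := map (@psX k N) s in
  forall i, (i < size zs)%N -> forall u, M u ->
    in_sub M K (take i zs) (pscale (nth (@ps0 k N) zs i) u) ->
    in_sub M K (take i zs) u.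
Proof.
move=> us Mstab Kstab zs i; rewrite size_map => lti u _.
have [x0 _] : exists x0 : 'I_N, True.
  by case: s {us Mstab Kstab zs} lti => // x0; exists x0.
rewrite (nth_map x0) // -map_take.
have i0s : nth x0 s i \in s := mem_nth x0 lti.
apply: psX_nonzerodivisor; [exact: Mstab i0s | exact: Kstab i0s |].
move=> z /List.in_map_iff[j [<- /In_mem jin]]; apply: psX_freeX.
by apply: contraNneq (nth_notin_take x0 us lti) => <-.
Qed.

Theorem lemma3p4 (k : fieldType) (n n' p q : nat)
  (hp : (p <= n)%N) (hq : (q <= n')%N)
  (GJ GJ' : ps k (n + n') -> Prop) :
  let xt : pred 'I_(n + n') := fun i => (p <= i < n)%N in
  let yt : pred 'I_(n + n') := fun i => (n + q <= i)%N in
  (forall g, GJ g -> only_vars xt g) ->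
  (forall g, GJ g -> prod_ideal xt xt g) ->
  (forall g, GJ' g -> only_vars yt g) ->
  (forall g, GJ' g -> prod_ideal yt yt g) ->
  let J := ideal_gen GJ in
  let J' := ideal_gen GJ' in
  let I1 := ideal_add J (var_ideal yt) in
  let I2 := ideal_add (var_ideal xt) J' in
  let M := fun u : pair k (n + n') =>
    var_ideal (fun i => xt i || yt i) (psadd u.1 (psopp u.2)) in
  let K := fun u : pair k (n + n') => I1 u.1 /\ I2 u.2 in
  let zs := map (@psX k (n + n'))
     (filter (fun i : 'I_(n + n') => (i < p)%N || (n <= i < n + q)%N)
        (enum 'I_(n + n'))) in
  regular_seq_mod M K zs.
Proof.
move=> xt yt GJx GJxx GJ'y GJ'yy J J' I1 I2 M K zs.
have fresh i0 :
    i0 \in filter (fun i : 'I_(n + n') => (i < p)%N || (n <= i < n + q)%N)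
      (enum 'I_(n + n')) -> ~~ xt i0 /\ ~~ yt i0.
  by rewrite mem_filter /xt /yt => /andP[]; lia.
split.
- apply: psX_seq_nonzerodivisor; first by rewrite filter_uniq ?enum_uniq.
    move=> i0 /fresh[nx ny] v; apply: var_ideal_divX; by rewrite negb_or nx.
  move=> i0 /fresh[nx ny] v [I1v I2v]; split.
    by apply: ideal_add_divX I1v => f;
      [apply: only_vars_ideal_divX nx GJx | apply: var_ideal_divX ny].
  by apply: ideal_add_divX I2v => f;
    [apply: var_ideal_divX nx | apply: only_vars_ideal_divX ny GJ'y].
- apply: psX_seq_nontrivial.
    move=> w [[a [b [Ja [yb ->]]]] _].
    rewrite /psadd (var_ideal_const yb) (ideal_gen_const _ Ja) ?addr0 //.
    by move=> g /GJxx/prod_ideal_const.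
  exists [::]; split => //=.
  by apply: functional_extensionality => m; rewrite /psadd /psopp subrr.
Qed.
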